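(* The clone $\mathscr{C}_{I_{\bar d=0}}$ is precomplete, i.e., it is a coatom of the lattice of all clones on $\mathbb{N}$: $\mathscr{C}_{I_{\bar d=0}}\ne\mathscr{O}$, and the only clone properly containing $\mathscr{C}_{I_{\bar d=0}}$ is $\mathscr{O}$.
   Context: $\mathbb{N}=\{0,1,2,\dots\}$, $\mathscr{O}$ is the set of all finitary functions $\mathbb{N}^k\to\mathbb{N}$, $k\ge1$. A clone is a subset of $\mathscr{O}$ containing all projections and closed under composition. For $A\subseteq\mathbb{N}$, $\bar d(A)=\limsup_{n\to\infty}\frac{|A\cap[0,n)|}{n}$. $\mathscr{C}_{I_{\bar d=0}}$ is the set of all $k$-ary $f\in\mathscr{O}$ such that $\bar d(f[A^k])=0$ for every $A\subseteq\mathbb{N}$ with $\bar d(A)=0$. *)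

From Stdlib Require Import Reals Arith Classical ClassicalDescription Fin.
From Coquelicot Require Import Coquelicot.
Open Scope R_scope.

Fixpoint cnt (A : nat -> Prop) (n : nat) : nat :=
  match n with
  | O => O
  | S n' => (cnt A n' + (if excluded_middle_informative (A n') then 1 else 0))%nat
  end.

Definition upper_density (A : nat -> Prop) : Rbar :=
  LimSup_seq (fun n => INR (cnt A n) / INR n).

(* A finitary operation on N of arity k+1 >= 1 (arguments indexed by Fin.t (S k)). *)
Definition op : Type := {k : nat & ((Fin.t (S k) -> nat) -> nat)}.

Definition proj (m : nat) (i : Fin.t (S m)) : op :=
  existT _ m (fun x => x i).

Definition comp (k m : nat) (f : (Fin.t (S k) -> nat) -> nat)
  (g : Fin.t (S k) -> ((Fin.t (S m) -> nat) -> nat)) : op :=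
  existT _ m (fun x => f (fun j => g j x)).

Definition is_clone (C : op -> Prop) : Prop :=
  (forall (m : nat) (i : Fin.t (S m)), C (proj m i)) /\
  (forall (k m : nat) (f : (Fin.t (S k) -> nat) -> nat)
          (g : Fin.t (S k) -> ((Fin.t (S m) -> nat) -> nat)),
      C (existT _ k f) -> (forall j, C (existT _ m (g j))) -> C (comp k m f g)).

Definition image_pow (k : nat) (f : (Fin.t (S k) -> nat) -> nat) (A : nat -> Prop)
  : nat -> Prop :=
  fun y => exists x : Fin.t (S k) -> nat, (forall j, A (x j)) /\ f x = y.

Definition C_dbar0 (o : op) : Prop :=
  forall A : nat -> Prop, upper_density A = Finite 0 ->
    upper_density (image_pow (projT1 o) (projT2 o) A) = Finite 0.

(* If f is not in the clone, some null set A has an image Y = f[A^k] of positive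
   upper density.  Pick a rapidly growing sequence s_j at which Y is dense, and
   copy the piece Y ∩ [s_{j-1}, s_j) periodically, with period s_j, across
   [s_j, s_{j+1}).  The resulting set T has positive lower density, while the
   copying map (a, j, k) ↦ a + k s_j still sends null sets to null sets.  Hence
   W(a, b, c) = rank in T of the copy of a indexed by (log2 b, log2 c) lies in
   the clone and maps Y × P × P onto ℕ, P being the null set of powers of two.
   Every h then factors as W(f ∘ α, β, γ), where α, β, γ pick preimages along h:
   the coordinates of α take values in A and β, γ in P, so they are in the clone
   as well.  Finally log2 maps P onto ℕ, so it is not in the clone. *)

From Stdlib Require Import Reals Lra Lia Arith List.
From Stdlib Require Import Classical ClassicalDescription FunctionalExtensionality.
From Stdlib Require ClassicalEpsilon.
From Coquelicot Require Import Coquelicot.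

Lemma LimSup_seq_nonneg_eq_0 (u : nat -> R) : (forall n, 0 <= u n) ->
  LimSup_seq u = Finite 0 <->
  forall eps : posreal, exists N, forall n, (N <= n)%nat -> u n < eps.
Proof.
  intros Hu. split.
  - intros Hlim eps. destruct (ex_LimSup_seq u) as [l Hl].
    rewrite (is_LimSup_seq_unique _ _ Hl) in Hlim. subst l.
    destruct (Hl eps) as [_ [N HN]]. exists N. intros n Hn.
    specialize (HN n Hn). simpl in HN. lra.
  - intros H. apply is_LimSup_seq_unique. intros eps. split.
    + intros N. exists N. split; [lia|]. specialize (Hu N). destruct eps. simpl. lra.
    + destruct (H eps) as [N HN]. exists N. intros n Hn. specialize (HN n Hn). lra.
Qed.

Lemma ratio_eventually_lt_iff (c : nat -> nat) :
  (forall K, exists N, forall n, (N <= n)%nat -> (K * c n <= n)%nat) <->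
  forall eps : posreal, exists N, forall n, (N <= n)%nat -> INR (c n) / INR n < eps.
Proof.
  split.
  - intros H [eps Heps]. destruct (INR_unbounded (/ eps)) as [K HK].
    destruct (H K) as [N HN]. exists (S N). intros n Hn. simpl.
    assert (Hn0 : 0 < INR n) by (apply lt_0_INR; lia).
    apply Rlt_div_l; [lra|].
    specialize (HN n ltac:(lia)). apply le_INR in HN. rewrite mult_INR in HN.
    assert (HepsK : 1 < eps * INR K).
    { apply (Rmult_lt_compat_l eps) in HK; [|lra]. rewrite Rinv_r in HK; lra. }
    assert (eps * (INR K * INR (c n)) <= eps * INR n) by (apply Rmult_le_compat_l; lra).
    destruct (Rle_lt_or_eq_dec 0 (INR (c n)) (pos_INR _)) as [Hc | <-]; nra.
  - intros H K. assert (HK : 0 < INR (S K)) by (apply lt_0_INR; lia).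
    destruct (H (mkposreal _ (Rinv_0_lt_compat _ HK))) as [N HN].
    exists (S N). intros n Hn. specialize (HN n ltac:(lia)). cbn [pos] in HN.
    assert (Hn0 : 0 < INR n) by (apply lt_0_INR; lia).
    apply Rlt_div_l in HN; [|lra].
    apply (Rmult_lt_compat_l (INR (S K))) in HN; [|lra].
    rewrite <- Rmult_assoc, Rinv_r, Rmult_1_l, <- mult_INR in HN by (apply not_0_INR; lia).
    apply INR_lt in HN. lia.
Qed.

Local Open Scope nat_scope.

Lemma cnt_S P n :
  cnt P (S n) = cnt P n + (if excluded_middle_informative (P n) then 1 else 0).
Proof. reflexivity. Qed.

Definition below (P : nat -> Prop) (n : nat) : list nat :=
  filter (fun x => if excluded_middle_informative (P x) then true else false) (seq 0 n).

Lemma length_below P n : length (below P n) = cnt P n.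
Proof.
  induction n as [|n IH]; [reflexivity|].
  unfold below in *. rewrite seq_S, filter_app, length_app, IH, cnt_S. simpl.
  destruct (excluded_middle_informative (P n)); reflexivity.
Qed.

Lemma In_below P n x : In x (below P n) <-> x < n /\ P x.
Proof.
  unfold below. rewrite filter_In, in_seq.
  destruct (excluded_middle_informative (P x)); intuition (try lia; discriminate).
Qed.

Lemma cnt_le_image (P Q : nat -> Prop) (g : nat -> nat) m M :
  (forall y, y < m -> P y -> exists x, x < M /\ Q x /\ g x = y) ->
  cnt P m <= cnt Q M.
Proof.
  intros Hg. rewrite <- !length_below, <- (length_map g (below Q M)).
  apply NoDup_incl_length.
  - apply NoDup_filter, seq_NoDup.
  - intros y Hy. apply In_below in Hy as [Hym HPy].
    destruct (Hg y Hym HPy) as (x & HxM & HQx & <-).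
    apply in_map, In_below. auto.
Qed.

Lemma cnt_mono (P Q : nat -> Prop) m M :
  m <= M -> (forall y, y < m -> P y -> Q y) -> cnt P m <= cnt Q M.
Proof.
  intros HmM HPQ. apply (cnt_le_image P Q (fun x => x)).
  intros y Hy HPy. exists y. repeat split; auto; lia.
Qed.

Lemma cnt_ext (P Q : nat -> Prop) n :
  (forall x, x < n -> P x <-> Q x) -> cnt P n = cnt Q n.
Proof.
  intros HPQ. apply Nat.le_antisymm; apply cnt_mono; auto; intros y Hy; apply HPQ; auto.
Qed.

Lemma cnt_full n : cnt (fun _ => True) n = n.
Proof.
  induction n as [|n IH]; [reflexivity|]. rewrite cnt_S, IH.
  destruct (excluded_middle_informative True); [lia | tauto].
Qed.

Lemma cnt_lt p n : cnt (fun x => x < p) n <= p.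
Proof.
  transitivity (cnt (fun _ => True) p); [|rewrite cnt_full; lia].
  apply (cnt_le_image _ _ (fun x => x)). intros y _ Hy. exists y. auto.
Qed.

Lemma cnt_or (P Q : nat -> Prop) n :
  cnt (fun x => P x \/ Q x) n <= cnt P n + cnt Q n.
Proof.
  induction n as [|n IH]; [reflexivity|]. rewrite !cnt_S.
  destruct (excluded_middle_informative (P n \/ Q n)),
    (excluded_middle_informative (P n)), (excluded_middle_informative (Q n));
    tauto || lia.
Qed.

Lemma cnt_add P n m : cnt P (n + m) = cnt P n + cnt (fun v => P (n + v)) m.
Proof.
  induction m as [|m IH]; [rewrite Nat.add_0_r; simpl; lia|].
  rewrite Nat.add_succ_r, !cnt_S, IH. lia.
Qed.

Lemma cnt_mod (P : nat -> Prop) p d :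
  0 < p -> cnt (fun v => P (v mod p)) (d * p) = d * cnt P p.
Proof.
  intros Hp. induction d as [|d IH]; [reflexivity|].
  replace (S d * p) with (d * p + p) by lia.
  rewrite cnt_add, IH.
  rewrite (cnt_ext (fun v => P ((d * p + v) mod p)) P); [lia|].
  intros x Hx. rewrite Nat.add_comm, Nat.Div0.mod_add, Nat.mod_small; tauto.
Qed.

Lemma cnt_mod_le (P : nat -> Prop) p t :
  0 < p -> cnt (fun v => P (v mod p)) t <= (t / p + 1) * cnt P p.
Proof.
  intros Hp. rewrite <- cnt_mod by exact Hp. apply cnt_mono; auto.
  pose proof (Nat.div_mod_eq t p). pose proof (Nat.mod_upper_bound t p ltac:(lia)). nia.
Qed.

Lemma cnt_rank_surj (P : nat -> Prop) n y :
  y < cnt P n -> exists v, P v /\ cnt P v = y.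
Proof.
  induction n as [|n IH]; intros Hy; [simpl in Hy; lia|].
  destruct (Nat.lt_ge_cases y (cnt P n)) as [Hlt | Hge]; [auto|].
  rewrite cnt_S in Hy. destruct (excluded_middle_informative (P n)); [|lia].
  exists n. split; auto; lia.
Qed.

Definition density_zero (P : nat -> Prop) : Prop :=
  forall K, exists N, forall n, N <= n -> K * cnt P n <= n.

Lemma upper_density_zero_iff P : upper_density P = Finite 0 <-> density_zero P.
Proof.
  unfold upper_density, density_zero.
  rewrite LimSup_seq_nonneg_eq_0, ratio_eventually_lt_iff; [reflexivity|].
  intros [|n]; [simpl; rewrite Rdiv_0_l; lra|].
  apply Rdiv_le_0_compat; [apply pos_INR | apply lt_0_INR; lia].
Qed.

Lemma not_density_zero P :
  ~ density_zero P -> exists K, forall N, exists n, N <= n /\ n < K * cnt P n.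
Proof.
  intros HP. apply not_all_ex_not in HP as [K HK]. exists K. intros N.
  apply not_ex_all_not with (n := N) in HK. apply not_all_ex_not in HK as [n Hn].
  exists n. apply imply_to_and in Hn as [HNn Hn]. split; [exact HNn | lia].
Qed.

Lemma density_zero_mono (P Q : nat -> Prop) :
  (forall x, P x -> Q x) -> density_zero Q -> density_zero P.
Proof.
  intros HPQ HQ K. destruct (HQ K) as [N HN]. exists N. intros n Hn.
  specialize (HN n Hn). pose proof (cnt_mono P Q n n (le_n n) (fun y _ => HPQ y)). nia.
Qed.

Lemma density_zero_or (P Q : nat -> Prop) :
  density_zero P -> density_zero Q -> density_zero (fun x => P x \/ Q x).
Proof.
  intros HP HQ K. destruct (HP (2 * K)) as [N1 H1], (HQ (2 * K)) as [N2 H2].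
  exists (N1 + N2). intros n Hn.
  specialize (H1 n ltac:(lia)). specialize (H2 n ltac:(lia)).
  pose proof (cnt_or P Q n). nia.
Qed.

Lemma density_zero_ex_fin n (P : Fin.t n -> nat -> Prop) :
  (forall i, density_zero (P i)) -> density_zero (fun v => exists i, P i v).
Proof.
  induction n as [|n IH]; intros HP.
  - intros K. exists 0. intros m _.
    assert (cnt (fun v => exists i, P i v) m <= cnt (fun x => x < 0) m).
    { apply cnt_mono; [lia | intros y _ [i _]; inversion i]. }
    pose proof (cnt_lt 0 m). nia.
  - apply (density_zero_mono _ (fun v => P Fin.F1 v \/ exists i, P (Fin.FS i) v)).
    + intros x [i Hi]. revert Hi. apply (Fin.caseS' i); eauto.
    + apply density_zero_or; [apply HP | apply (IH (fun i => P (Fin.FS i))); auto].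
Qed.

Lemma C_dbar0_iff k f :
  C_dbar0 (existT _ k f) <->
  forall A, density_zero A -> density_zero (image_pow k f A).
Proof.
  unfold C_dbar0; simpl.
  split; intros H A HA; apply upper_density_zero_iff, H, upper_density_zero_iff, HA.
Qed.

Lemma C_dbar0_of_null_range m F (Z : nat -> Prop) :
  (forall x, Z (F x)) -> density_zero Z -> C_dbar0 (existT _ m F).
Proof.
  intros HF HZ. apply C_dbar0_iff. intros A _.
  apply (density_zero_mono _ Z); [intros y [x [_ <-]]; apply HF | exact HZ].
Qed.

Lemma is_clone_C_dbar0 : is_clone C_dbar0.
Proof.
  split.
  - intros m i. apply C_dbar0_iff. intros A HA.
    apply (density_zero_mono _ A); [intros y [x [Hx <-]]; apply Hx | exact HA].
  - intros k m f g Hf Hg. apply C_dbar0_iff. intros A HA.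
    apply (density_zero_mono _ (image_pow k f (fun v => exists j, image_pow m (g j) A v))).
    + intros y [x [Hx <-]]. exists (fun j => g j x). split; [|reflexivity].
      intros j. exists j, x. auto.
    + apply C_dbar0_iff; [exact Hf|].
      apply density_zero_ex_fin. intros j. apply C_dbar0_iff; auto.
Qed.

Definition pow2 (b : nat) : Prop := exists j, b = 2 ^ j.

Lemma density_zero_pow2 : density_zero pow2.
Proof.
  intros K. exists (2 ^ (4 * K)). intros n Hn.
  assert (Hn0 : 0 < n) by (pose proof (Nat.pow_nonzero 2 (4 * K)); lia).
  set (L := Nat.log2 n).
  assert (HL : cnt pow2 n <= S L).
  { rewrite <- (cnt_full (S L)). apply (cnt_le_image _ _ (fun j => 2 ^ j)).
    intros y Hy [j ->]. exists j. repeat split.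
    assert (j <= L); [apply Nat.log2_le_pow2; lia | lia]. }
  assert (HKL : 4 * K <= L).
  { unfold L. rewrite <- (Nat.log2_pow2 (4 * K)) by lia. apply Nat.log2_le_mono, Hn. }
  assert (Hsq : forall l, (l + 1) * (l + 1) <= 4 * 2 ^ l).
  { induction l as [|l IH]; [simpl; lia|].
    rewrite Nat.pow_succ_r'. destruct l as [|[|l]]; simpl in *; nia. }
  pose proof (Hsq L). pose proof (Nat.log2_spec n Hn0) as [HLn _]. fold L in HLn.
  nia.
Qed.

Lemma log2_not_C_dbar0 : ~ C_dbar0 (existT _ 0 (fun x => Nat.log2 (x Fin.F1))).
Proof.
  rewrite C_dbar0_iff. intros H.
  destruct (H pow2 density_zero_pow2 2) as [N HN]. specialize (HN (S N) (le_S _ _ (le_n N))).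
  rewrite (cnt_ext _ (fun _ => True)), cnt_full in HN; [lia|].
  intros y _. split; [intros _; exact I|]. intros _.
  exists (fun _ => 2 ^ y). split; [intros _; exists y; reflexivity | apply Nat.log2_pow2; lia].
Qed.

Lemma cnt_mod_density (X : nat -> Prop) K p t :
  0 < p -> p <= t -> K * cnt X p <= p -> K * cnt (fun v => X (v mod p)) t <= 2 * t.
Proof.
  intros Hp Hpt HX. pose proof (cnt_mod_le X p t Hp).
  pose proof (Nat.Div0.mul_div_le t p). nia.
Qed.

Lemma density_zero_rank (T V : nat -> Prop) L x0 :
  (forall x, x0 <= x -> x <= L * cnt T x) -> density_zero V ->
  density_zero (fun y => exists x, V x /\ y = cnt T x).
Proof.
  intros HT HV K. destruct (HV (2 * K * (L + 1))) as [N HN].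
  exists (N + x0 + 1). intros m Hm.
  assert (Hc : cnt (fun y => exists x, V x /\ y = cnt T x) m <= cnt V (x0 + (L + 1) * m)).
  { apply (cnt_le_image _ _ (cnt T)). intros y Hy [x [Vx ->]].
    exists x. split; [|auto].
    destruct (le_lt_dec x0 x) as [Hx | Hx]; [|nia].
    specialize (HT x Hx). nia. }
  specialize (HN (x0 + (L + 1) * m) ltac:(nia)).
  set (cY := cnt _ m) in Hc |- *. set (cV := cnt V _) in Hc, HN.
  assert (K * (L + 1) * cY <= K * (L + 1) * cV) by (apply Nat.mul_le_mono_l; exact Hc).
  apply (Nat.mul_le_mono_pos_l _ _ (2 * (L + 1))); lia.
Qed.

Section Spreading.

Variable s : nat -> nat.
Hypothesis s_growth : forall j, S j * s j < s (S j).

Lemma le_s j : j <= s j.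
Proof.
  induction j as [|j IH]; [lia|]. specialize (s_growth j).
  destruct (s j) as [|sj]; nia.
Qed.

Lemma s_lt_S j : s j < s (S j).
Proof. specialize (s_growth j). nia. Qed.

Lemma s_le_mono i j : i <= j -> s i <= s j.
Proof. induction 1 as [|j _ IH]; [lia|]. pose proof (s_lt_S j). lia. Qed.

Lemma s_level m t : s m <= t -> exists i, m <= i /\ s i <= t < s (S i).
Proof.
  intros Hmt.
  assert (Hd : forall d, t < s (m + d) -> exists i, m <= i /\ s i <= t < s (S i)).
  { induction d as [|d IH]; intros Hd; [rewrite Nat.add_0_r in Hd; lia|].
    destruct (le_lt_dec (s (m + d)) t).
    - exists (m + d). rewrite Nat.add_succ_r in Hd. split; [lia | auto].
    - apply IH; auto. }
  apply (Hd (S t)). pose proof (le_s (m + S t)). lia.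
Qed.

Definition prev (j : nat) : nat := match j with 0 => 0 | S j' => s j' end.

Definition spread (a j k : nat) : nat :=
  if ((prev j <=? a) && (a <? s j) && (a + s j * k <? s (S j)))%bool
  then a + s j * k else a.

Definition spread_image (X : nat -> Prop) (v : nat) : Prop :=
  exists a j k, X a /\ v = spread a j k.

Lemma spread_small_cases (X : nat -> Prop) i a j k :
  X a -> spread a j k < s (S (S i)) ->
  spread a j k < s i \/ X (spread a j k) \/
  X (spread a j k mod s i) \/ X (spread a j k mod s (S i)).
Proof.
  intros Xa. unfold spread.
  destruct (prev j <=? a), (a <? s j) eqn:Ha, (a + s j * k <? s (S j)) eqn:Hk;
    simpl; auto.
  apply Nat.ltb_lt in Ha, Hk. intros Hv.
  destruct k as [|k]; [rewrite Nat.mul_0_r, Nat.add_0_r; auto|].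
  assert (Hmod : (a + s j * S k) mod s j = a).
  { rewrite Nat.mul_comm, Nat.Div0.mod_add. apply Nat.mod_small, Ha. }
  destruct (Nat.lt_total j i) as [Hji | [-> | Hij]].
  - left. pose proof (s_le_mono (S j) i Hji). lia.
  - right; right; left. rewrite Hmod. exact Xa.
  - destruct (Nat.eq_dec j (S i)) as [-> | Hj]; [right; right; right; rewrite Hmod; exact Xa|].
    pose proof (s_le_mono (S (S i)) j ltac:(lia)). nia.
Qed.

Lemma cnt_spread_image_le (X : nat -> Prop) i t :
  t <= s (S (S i)) ->
  cnt (spread_image X) t <= s i + cnt X t
    + cnt (fun v => X (v mod s i)) t + cnt (fun v => X (v mod s (S i))) t.
Proof.
  intros Ht.
  transitivity (cnt (fun v => v < s i \/ X v \/ X (v mod s i) \/ X (v mod s (S i))) t).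
  - apply cnt_mono; [lia|]. intros v Hv (a & j & k & Xa & ->).
    apply spread_small_cases; [exact Xa | lia].
  - pose proof (cnt_lt (s i) t).
    pose proof (cnt_or (fun v => v < s i) (fun v => X v \/ X (v mod s i) \/ X (v mod s (S i))) t).
    pose proof (cnt_or X (fun v => X (v mod s i) \/ X (v mod s (S i))) t).
    pose proof (cnt_or (fun v => X (v mod s i)) (fun v => X (v mod s (S i))) t).
    lia.
Qed.

Lemma density_zero_spread_image (X : nat -> Prop) :
  density_zero X -> density_zero (spread_image X).
Proof.
  intros HX K. destruct (HX (8 * K)) as [N HN].
  exists (s (S (S (N + 4 * K)))). intros t Ht.
  destruct (s_level _ _ Ht) as [[|[|i]] [Hi [Hit HtS]]]; [lia | lia |].
  pose proof (le_s (S i)). pose proof (s_growth (S i)). pose proof (le_s (S (S i))).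
  assert (Hsi : 4 * K * s (S i) <= t) by nia.
  pose proof (cnt_spread_image_le X (S i) t ltac:(lia)).
  pose proof (HN t ltac:(lia)).
  pose proof (cnt_mod_density X (8 * K) (s (S i)) t ltac:(lia) ltac:(lia)
    (HN (s (S i)) ltac:(lia))).
  pose proof (cnt_mod_density X (8 * K) (s (S (S i))) t ltac:(lia) ltac:(lia)
    (HN (s (S (S i))) ltac:(lia))).
  nia.
Qed.

Variables (Y : nat -> Prop) (K : nat).
Hypothesis s_dense : forall j, s j < K * cnt Y (s j).
Hypothesis s_sparse : forall j, 2 * K * s j <= s (S j).

Lemma spread_image_lower_density t :
  s 0 <= t -> t <= 4 * K * cnt (spread_image Y) t.
Proof.
  intros Ht. destruct (s_level 0 t Ht) as [i [_ [Hit HtS]]].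
  pose proof (s_dense i) as Hdense.
  assert (Hsi : 0 < s i) by (destruct (s i); [simpl in Hdense |]; lia).
  set (R := fun a => Y a /\ prev i <= a).
  set (d := t / s i).
  assert (Hd : s i * d <= t < s i * (d + 1)).
  { pose proof (Nat.div_mod_eq t (s i)). pose proof (Nat.mod_upper_bound t (s i) ltac:(lia)).
    unfold d. nia. }
  assert (HRT : d * cnt R (s i) <= cnt (spread_image Y) t).
  { rewrite <- cnt_mod by exact Hsi. apply cnt_mono; [nia|].
    intros v Hv [Yv Hprev]. exists (v mod s i), i, (v / s i). split; [exact Yv|].
    pose proof (Nat.div_mod_eq v (s i)). pose proof (Nat.mod_upper_bound v (s i) ltac:(lia)).
    unfold spread.
    replace (prev i <=? v mod s i) with true by (symmetry; apply Nat.leb_le, Hprev).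
    replace (v mod s i <? s i) with true by (symmetry; apply Nat.ltb_lt; lia).
    replace (v mod s i + s i * (v / s i) <? s (S i)) with true
      by (symmetry; apply Nat.ltb_lt; nia).
    simpl. lia. }
  assert (HYR : cnt Y (s i) <= cnt R (s i) + prev i).
  { transitivity (cnt (fun a => R a \/ a < prev i) (s i)).
    - apply cnt_mono; [lia|]. intros a _ Ya.
      destruct (le_lt_dec (prev i) a); [left; split | right]; auto.
    - pose proof (cnt_or R (fun a => a < prev i) (s i)). pose proof (cnt_lt (prev i) (s i)). lia. }
  assert (Hprev : 2 * K * prev i <= s i) by (destruct i; simpl; [lia | apply s_sparse]).
  assert (d >= 1) by nia.
  assert (s i < 2 * K * cnt R (s i)) by nia.
  nia.
Qed.

End Spreading.

Lemma fast_dense_sequence (Y : nat -> Prop) K :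
  (forall N, exists n, N <= n /\ n < K * cnt Y n) ->
  exists s : nat -> nat,
    (forall j, 2 * K * S j * s j < s (S j)) /\ (forall j, s j < K * cnt Y (s j)).
Proof.
  intros HY. destruct (ClassicalEpsilon.choice _ HY) as [pick Hpick].
  set (s := nat_rect _ (pick 0) (fun j sj => pick (2 * K * S j * sj + 1))).
  assert (s_S : forall j, s (S j) = pick (2 * K * S j * s j + 1)) by reflexivity.
  exists s. split.
  - intros j. rewrite s_S. pose proof (Hpick (2 * K * S j * s j + 1)). lia.
  - intros [|j]; [apply Hpick | rewrite s_S; apply Hpick].
Qed.

Definition triple {X : Type} (a b c : X) (i : Fin.t 3) : X :=
  match proj1_sig (Fin.to_nat i) with 0 => a | 1 => b | _ => c end.

Lemma surjective_decoder (Y : nat -> Prop) K :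
  (forall N, exists n, N <= n /\ n < K * cnt Y n) ->
  exists W, C_dbar0 (existT _ 2 W) /\
    forall y, exists a b c, Y a /\ pow2 b /\ pow2 c /\ W (triple a b c) = y.
Proof.
  intros HY. destruct (fast_dense_sequence Y K HY) as [s [Hgrow Hdense]].
  assert (HK : 1 <= K) by (specialize (Hdense 0); destruct K; lia).
  assert (Hgrow1 : forall j, S j * s j < s (S j)) by (intros j; specialize (Hgrow j); nia).
  assert (Hgrow2 : forall j, 2 * K * s j <= s (S j)) by (intros j; specialize (Hgrow j); nia).
  set (T := spread_image s Y).
  pose proof (spread_image_lower_density s Hgrow1 Y K Hdense Hgrow2) as HT. fold T in HT.
  exists (fun v => cnt T (spread s (v Fin.F1) (Nat.log2 (v (Fin.FS Fin.F1)))
                                  (Nat.log2 (v (Fin.FS (Fin.FS Fin.F1)))))).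
  split.
  - apply C_dbar0_iff. intros X HX.
    apply (density_zero_mono _ (fun y => exists x, spread_image s X x /\ y = cnt T x)).
    + intros y [v [Hv <-]]. eexists. split; [|reflexivity]. do 3 eexists. split; [apply Hv | reflexivity].
    + apply (density_zero_rank T _ (4 * K) (s 0)); [exact HT|].
      apply density_zero_spread_image; assumption.
  - intros y. pose proof (HT (s 0 + 4 * K * (y + 1)) ltac:(lia)).
    destruct (cnt_rank_surj T (s 0 + 4 * K * (y + 1)) y ltac:(nia))
      as [v [(a & j & k & Ya & ->) Hv]].
    exists a, (2 ^ j), (2 ^ k). repeat split; [exact Ya | exists j | exists k |]; auto.
    unfold triple; simpl. rewrite !Nat.log2_pow2 by lia. exact Hv.
Qed.

Lemma clone_full_of_decoder (D : op -> Prop) k f A W :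
  is_clone D -> (forall o, C_dbar0 o -> D o) -> D (existT _ k f) ->
  density_zero A -> C_dbar0 (existT _ 2 W) ->
  (forall y, exists a b c, image_pow k f A a /\ pow2 b /\ pow2 c /\ W (triple a b c) = y) ->
  forall o, D o.
Proof.
  intros [_ Dcomp] HCD Df HA HW Hsurj [m h].
  assert (Hpre : forall y, exists p : (Fin.t (S k) -> nat) * nat * nat,
    (forall i, A (fst (fst p) i)) /\ pow2 (snd (fst p)) /\ pow2 (snd p) /\
    W (triple (f (fst (fst p))) (snd (fst p)) (snd p)) = y).
  { intros y. destruct (Hsurj y) as (a & b & c & [x [Ax <-]] & Hb & Hc & Hy).
    exists (x, b, c). auto. }
  destruct (ClassicalEpsilon.choice _ Hpre) as [pre Hpre'].
  set (g := triple (fun x => f (fst (fst (pre (h x))))) (fun x => snd (fst (pre (h x))))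
                   (fun x => snd (pre (h x)))).
  assert (Dg : forall i, D (existT _ m (g i))).
  { assert (Da : D (existT _ m (fun x => f (fst (fst (pre (h x))))))).
    { apply (Dcomp k m f (fun i x => fst (fst (pre (h x))) i) Df). intros i.
      apply HCD, (C_dbar0_of_null_range _ _ A); [intros x; apply Hpre' | exact HA]. }
    assert (Db : D (existT _ m (fun x => snd (fst (pre (h x)))))).
    { apply HCD, (C_dbar0_of_null_range _ _ pow2 (fun x => proj1 (proj2 (Hpre' (h x))))),
        density_zero_pow2. }
    assert (Dc : D (existT _ m (fun x => snd (pre (h x))))).
    { apply HCD, (C_dbar0_of_null_range _ _ pow2 (fun x => proj1 (proj2 (proj2 (Hpre' (h x)))))),
        density_zero_pow2. }
    intros i. unfold g, triple. destruct (proj1_sig (Fin.to_nat i)) as [|[|]]; assumption. }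
  replace h with (fun x => W (fun i => g i x)); [exact (Dcomp 2 m W g (HCD _ HW) Dg)|].
  apply functional_extensionality. intros x.
  rewrite <- (proj2 (proj2 (proj2 (Hpre' (h x))))). f_equal.
  apply functional_extensionality. intros i.
  unfold g, triple. destruct (proj1_sig (Fin.to_nat i)) as [|[|]]; reflexivity.
Qed.

Theorem mainTheorem7 :
  is_clone C_dbar0 /\
  (exists o : op, ~ C_dbar0 o) /\
  (forall D : op -> Prop, is_clone D ->
     (forall o, C_dbar0 o -> D o) ->
     (exists o, D o /\ ~ C_dbar0 o) ->
     forall o, D o).
Proof.
  split; [exact is_clone_C_dbar0|].
  split; [eexists; exact log2_not_C_dbar0|].
  intros D HD HCD [[k f] [Df Hf]].
  rewrite C_dbar0_iff in Hf. apply not_all_ex_not in Hf as [A HA].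
  apply imply_to_and in HA as [HA HY]. apply not_density_zero in HY as [K HY].
  destruct (surjective_decoder _ K HY) as (W & HW & Hsurj).
  exact (clone_full_of_decoder D k f A W HD HCD Df HA HW Hsurj).
Qed.
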